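(* Let $\mathbb{R}^n$ be endowed with the $\ell_1$ norm and $\mathbb{R}^m$ with the Euclidean norm $\|\cdot\|_2$. Let $f(u)=\frac12\langle Qu,u\rangle+\langle b,u\rangle$ with $b\in\mathbb{R}^m$ and $Q\in\mathbb{R}^{m\times m}$ symmetric positive definite. Then for every $A\in\mathbb{R}^{m\times n}$ with at least two different columns, \[ L_{f,A}=\frac{\mathrm{diam}(Q^{1/2}A)^2}{4},\qquad \mu_{f,A}=\frac{\Phi(Q^{1/2}A)^2}{4}, \] and in particular $\dfrac{L_{f,A}}{\mu_{f,A}}=\dfrac{\mathrm{diam}(Q^{1/2}A)^2}{\Phi(Q^{1/2}A)^2}$.
   Context: $\Delta_{n-1}=\{x\in\mathbb{R}^n_+ : \sum_i x_i=1\}$. A matrix $A\in\mathbb{R}^{m\times n}$ is also identified with the set of its columns; $\mathrm{conv}(A)=\{Ax:x\in\Delta_{n-1}\}$. For $u\in\mathrm{conv}(A)$, $Z(u)=\{z\in\Delta_{n-1}:Az=u\}$ and $\mathrm{dist}(x,Z(u))=\min_{z\in Z(u)}\|x-z\|_1$. For a differentiable convex $f$ with $\mathrm{conv}(A)\subseteq\mathrm{dom}(f)$ and $A$ having at least two different columns, the relative smoothness and strong convexity constants are \[ L_{f,A}=\sup_{u\in\mathrm{conv}(A),\,x\in\Delta_{n-1}\setminus Z(u)}\frac{2(f(Ax)-f(u)-\langle\nabla f(u),Ax-u\rangle)}{\mathrm{dist}(x,Z(u))^2}, \] and $\mu_{f,A}$ is the same expression with $\inf$ in place of $\sup$. For a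 matrix $B$ (set of columns), $\mathrm{diam}(B)=\sup_{u,w\in B}\|u-w\|_2$, and the facial distance is $\Phi(B)=\min\{\mathrm{dist}(F,\mathrm{conv}(B\setminus F)): F\text{ a face of }\mathrm{conv}(B),\ \emptyset\ne F\ne\mathrm{conv}(B)\}$, where $B\setminus F$ denotes the columns of $B$ not in $F$ and $\mathrm{dist}(F,G)=\inf_{u\in F,w\in G}\|u-w\|_2$. *)

From HB Require Import structures.
From mathcomp Require Import all_boot all_order all_algebra.
From mathcomp Require Import all_classical all_reals all_analysis.
Set Implicit Arguments. Unset Strict Implicit. Unset Printing Implicit Defensive.
Import Order.TTheory GRing.Theory Num.Theory.
Import numFieldNormedType.Exports.
Local Open Scope classical_set_scope.
Local Open Scope ring_scope.

Section Defs.
Variable R : realType.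

Definition simplex (n : nat) : set 'cV[R]_n :=
  [set x | (forall i, 0 <= x i 0) /\ \sum_i x i 0 = 1].
Arguments simplex : clear implicits.

Definition convA (m n : nat) (A : 'M[R]_(m, n)) : set 'cV[R]_m :=
  [set A *m x | x in simplex n].

Definition Zset (m n : nat) (A : 'M[R]_(m, n)) (u : 'cV[R]_m) : set 'cV[R]_n :=
  [set z | simplex n z /\ A *m z = u].

Definition l1norm (n : nat) (x : 'cV[R]_n) : R := \sum_i `|x i 0|.

Definition distZ (m n : nat) (A : 'M[R]_(m, n)) (x : 'cV[R]_n) (u : 'cV[R]_m) : R :=
  inf [set l1norm (x - z) | z in Zset A u].

(* Bregman-type gap f(Ax) - f(u) - <grad f(u), Ax - u>, the inner-product term
   being the directional derivative of f at u in direction Ax - u *)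
Definition bregman (m n : nat) (f : 'cV[R]_m -> R) (A : 'M[R]_(m, n))
  (u : 'cV[R]_m) (x : 'cV[R]_n) : R :=
  f (A *m x) - f u - 'D_(A *m x - u) f u.

Definition ratio_set (m n : nat) (f : 'cV[R]_m -> R) (A : 'M[R]_(m, n)) : set (\bar R) :=
  [set r | exists (u : 'cV[R]_m) (x : 'cV[R]_n),
     [/\ convA A u, simplex n x, ~ Zset A u x &
         r = ((2 * bregman f A u x) / (distZ A x u) ^+ 2)%:E]].

Definition Lconst (m n : nat) (f : 'cV[R]_m -> R) (A : 'M[R]_(m, n)) : \bar R :=
  ereal_sup (ratio_set f A).
Definition muconst (m n : nat) (f : 'cV[R]_m -> R) (A : 'M[R]_(m, n)) : \bar R :=
  ereal_inf (ratio_set f A).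

Definition norm2 (m : nat) (v : 'cV[R]_m) : R := Num.sqrt (\sum_i (v i 0) ^+ 2).

Definition diam (m n : nat) (B : 'M[R]_(m, n)) : R :=
  sup [set norm2 (col i B - col j B) | i in [set: 'I_n] & j in [set: 'I_n]].

Definition setdist (m : nat) (F G : set 'cV[R]_m) : R :=
  inf [set norm2 (u - w) | u in F & w in G].

Definition convex_set (m : nat) (C : set 'cV[R]_m) : Prop :=
  forall x y t, C x -> C y -> 0 <= t <= 1 -> C ((1 - t) *: x + t *: y).

Definition is_face (m : nat) (C F : set 'cV[R]_m) : Prop :=
  [/\ F `<=` C, convex_set F &
      forall x y t, C x -> C y -> 0 < t < 1 -> F ((1 - t) *: x + t *: y) ->
        F x /\ F y].

Definition conv_cols_notin (m n : nat) (B : 'M[R]_(m, n)) (F : set 'cV[R]_m)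
  : set 'cV[R]_m :=
  [set B *m x | x in [set x | simplex n x /\ (forall j, F (col j B) -> x j 0 = 0)]].

Definition facial_dist (m n : nat) (B : 'M[R]_(m, n)) : R :=
  inf [set setdist F (conv_cols_notin B F) |
       F in [set F | [/\ is_face (convA B) F, F !=set0 & F <> convA B]]].

End Defs.

(* For the quadratic [f] the Bregman gap at [(u, x)] is [|S (A x - u)|^2 / 2], so both
   constants are extrema of [|B x - v|^2 / dist(x, Z(v))^2] for [B = S A], [v] in
   [conv B] and [x] in the simplex.  Writing [x - z = t (p - q)], with [z] a nearest
   point of [Z(v)] and [p], [q] simplex points of disjoint supports, the ratio is
   [|B p - B q|^2 / 4].  As [B p - B q] is a convex combination of differences of
   columns, this is at most [diam(B)^2 / 4], with equality for two vertices.
   Minimality of [z] forces [p] to vanish on the columns lying in the smallest face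
   containing [B q], so the ratio is at least [Phi(B)^2 / 4].  Conversely, if [u]
   lies in a proper face and [x] is supported on the columns outside it, every point
   of [Z(u)] is at distance 2 from [x], so the ratio is [|u - B x|^2 / 4]. *)

From Pilot Require Import Defs.
From HB Require Import structures.
From mathcomp Require Import all_boot all_order all_algebra.
From mathcomp Require Import all_classical all_reals all_analysis.
From mathcomp Require Import ring lra.
Set Implicit Arguments. Unset Strict Implicit. Unset Printing Implicit Defensive.
Import Order.TTheory GRing.Theory Num.Theory.
Import numFieldNormedType.Exports.
Local Open Scope classical_set_scope.
Local Open Scope ring_scope.

(* [all_analysis] exports its own [convA] and [convex_set]. *)
Local Notation convA := Pilot.Defs.convA.
Local Notation convex_set := Pilot.Defs.convex_set.

Section Simplex.
Variable R : realType.
Implicit Types (m n : nat).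

Lemma delta_cvE n (j i : 'I_n) : (delta_mx j 0 : 'cV[R]_n) i 0 = (i == j)%:R.
Proof. by rewrite mxE eqxx andbT. Qed.

Lemma sum_delta_cv n (j : 'I_n) : \sum_i (delta_mx j 0 : 'cV[R]_n) i 0 = 1.
Proof.
rewrite (bigD1 j) //= delta_cvE eqxx big1 ?addr0 // => i /negbTE ij.
by rewrite delta_cvE ij.
Qed.

Lemma simplex_delta n (j : 'I_n) : simplex (delta_mx j 0 : 'cV[R]_n).
Proof. by split; [move=> i; rewrite delta_cvE ler0n | exact: sum_delta_cv]. Qed.

Lemma simplex_le1 n (z : 'cV[R]_n) k : simplex z -> z k 0 <= 1.
Proof.
move=> [z0 <-]; rewrite (bigD1 k) //= lerDl.
by apply: sumr_ge0 => i _.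
Qed.

Lemma simplex_neq0 n (z : 'cV[R]_n) : simplex z -> exists k, z k 0 != 0.
Proof.
move=> [_ z1]; apply/existsP; apply: contraT; rewrite negb_exists => /forallP z0.
move: z1; rewrite big1 => [/eqP|i _]; first by rewrite eq_sym oner_eq0.
by apply/eqP; rewrite -[_ == _]negbK z0.
Qed.

Lemma simplex_eq_delta n (z : 'cV[R]_n) k : simplex z -> z k 0 = 1 ->
  z = delta_mx k 0.
Proof.
move=> [z0 z1] zk.
have rest0 : \sum_(i | i != k) z i 0 = 0 by move: z1; rewrite (bigD1 k) //= zk; lra.
apply/matrixP => i l; rewrite (ord1 l) delta_cvE.
have [->|ik] := eqVneq i k; first by rewrite zk.
exact: (psumr_eq0P (fun i _ => z0 i) rest0).
Qed.

Lemma simplex_split n (z : 'cV[R]_n) k : simplex z -> 0 < z k 0 < 1 ->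
  exists r, [/\ simplex r, r k 0 = 0, (forall j, z j 0 = 0 -> r j 0 = 0) &
    z = (1 - z k 0) *: r + z k 0 *: delta_mx k 0].
Proof.
move=> [z0 z1] /andP[zk0 zk1].
have zk1' : 1 - z k 0 != 0 by rewrite subr_eq0 eq_sym lt_eqF.
exists ((1 - z k 0)^-1 *: (z - z k 0 *: delta_mx k 0)); split.
- split.
    move=> i; rewrite !mxE eqxx andbT; have [->|ik] := eqVneq i k.
      by rewrite mulr1 subrr mulr0.
    rewrite mulr0 subr0 mulr_ge0 // invr_ge0; lra.
  under eq_bigr do rewrite !mxE eqxx andbT.
  rewrite -mulr_sumr sumrB -mulr_sumr.
  under [X in _ * (_ - _ * X)]eq_bigr do rewrite -delta_cvE.
  by rewrite sum_delta_cv z1 mulr1 mulVf.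
- by rewrite !mxE eqxx mulr1 subrr mulr0.
- move=> j zj; rewrite !mxE zj eqxx andbT; have [jk|//] := eqVneq j k.
    by move: zj; rewrite jk; lra.
  by rewrite mulr0 subrr mulr0.
- apply/matrixP => i l; rewrite (ord1 l) !mxE; field; exact: zk1'.
Qed.

Lemma simplex_comb3 n (r0 r1 r2 : 'cV[R]_n) l0 l1 l2 :
  simplex r0 -> simplex r1 -> simplex r2 ->
  0 <= l0 -> 0 <= l1 -> 0 <= l2 -> l0 + l1 + l2 = 1 ->
  simplex (l0 *: r0 + l1 *: r1 + l2 *: r2).
Proof.
move=> [p0 s0] [p1 s1] [p2 s2] h0 h1 h2 hs; split.
  by move=> i; rewrite !mxE !addr_ge0 // mulr_ge0.
under eq_bigr do rewrite !mxE.
by rewrite !big_split /= -!mulr_sumr s0 s1 s2 !mulr1.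
Qed.

Lemma simplex_convex n (r0 r1 : 'cV[R]_n) s : simplex r0 -> simplex r1 ->
  0 <= s <= 1 -> simplex ((1 - s) *: r0 + s *: r1).
Proof.
move=> s0 s1 /andP[s_ge0 s_le1].
have := simplex_comb3 s0 s1 s1 (l0 := 1 - s) (l1 := s) (l2 := 0).
by rewrite scale0r !addr0 subrK; apply; rewrite ?subr_ge0.
Qed.

Lemma convA_comb3 m n (B : 'M[R]_(m, n)) (a0 a1 a2 : 'cV[R]_m) l0 l1 l2 :
  convA B a0 -> convA B a1 -> convA B a2 ->
  0 <= l0 -> 0 <= l1 -> 0 <= l2 -> l0 + l1 + l2 = 1 ->
  convA B (l0 *: a0 + l1 *: a1 + l2 *: a2).
Proof.
move=> [r0 s0 <-] [r1 s1 <-] [r2 s2 <-] h0 h1 h2 hs.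
exists (l0 *: r0 + l1 *: r1 + l2 *: r2); first exact: simplex_comb3.
by rewrite !mulmxDr !scalemxAr.
Qed.

Lemma convA_convex m n (B : 'M[R]_(m, n)) : convex_set (convA B).
Proof.
move=> a c s ha hc /andP[s0 s1].
have := convA_comb3 ha hc ha (l0 := 1 - s) (l1 := s) (l2 := 0).
rewrite scale0r !addr0 subrK; apply=> //; by rewrite subr_ge0.
Qed.

Lemma convA_col m n (B : 'M[R]_(m, n)) j : convA B (col j B).
Proof. by exists (delta_mx j 0); [exact: simplex_delta | rewrite colE]. Qed.

Lemma l1norm_ge0 n (x : 'cV[R]_n) : 0 <= l1norm x.
Proof. exact: sumr_ge0. Qed.

Lemma l1norm_eq0 n (x : 'cV[R]_n) : l1norm x = 0 -> x = 0.
Proof.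
move=> x0; apply/matrixP => i j; rewrite (ord1 j) mxE.
by apply/normr0_eq0; exact: (psumr_eq0P (fun i _ => normr_ge0 (x i 0)) x0).
Qed.

Lemma l1norm_simplex_sub_le2 n (x z : 'cV[R]_n) :
  simplex x -> simplex z -> l1norm (x - z) <= 2.
Proof.
move=> [x0 x1] [z0 z1].
apply: (@le_trans _ _ (\sum_k (x k 0 + z k 0))); last by rewrite big_split /= x1 z1.
apply: ler_sum => k _; rewrite !mxE.
by apply: le_trans (ler_normB _ _) _; rewrite !ger0_norm.
Qed.

Lemma l1norm_sub_disjoint n (x z : 'cV[R]_n) : simplex x -> simplex z ->
  (forall k, x k 0 * z k 0 = 0) -> l1norm (x - z) = 2.
Proof.
move=> [x0 x1] [z0 z1] xz; rewrite /l1norm -[2]/(1 + 1) -{1}x1 -z1 -big_split /=.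
apply: eq_bigr => k _; rewrite !mxE.
have /eqP := xz k; rewrite mulf_eq0 => /orP[|] /eqP ->.
  by rewrite sub0r normrN add0r ger0_norm.
by rewrite subr0 addr0 ger0_norm.
Qed.

End Simplex.

Section NearestPoint.
Variables (R : realType) (m n : nat) (B : 'M[R]_(m, n)) (v : 'cV[R]_m).

Lemma closed_linear_row_eq (c : 'I_n -> R) (a : R) :
  closed [set r : 'rV[R]_n | \sum_i c i * r 0 i = a].
Proof.
apply: (@preimage_closed _ R (fun r : 'rV[R]_n => \sum_i c i * r 0 i) [set x | x = a]);
  last exact: closed_eq.
move=> r _; apply: continuous_big => [|i _ {}r]; first exact: add_continuous.
by apply: continuousM; [exact: cst_continuous | exact: coord_continuous].
Qed.

Lemma Zset_rowE : [set r : 'rV[R]_n | Zset B v r^T] =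
  \bigcap_i [set r | 0 <= r 0 i] `&` [set r | \sum_i 1 * r 0 i = 1] `&`
  \bigcap_k [set r | \sum_i B k i * r 0 i = v k 0].
Proof.
apply/seteqP; split => r /=.
  move=> [[r0 r1] rB]; split; first split.
  - by move=> i _; move: (r0 i); rewrite mxE.
  - by rewrite -[RHS]r1; apply: eq_bigr => i _; rewrite mxE mul1r.
  - by move=> k _; rewrite -rB mxE; apply: eq_bigr => i _; rewrite mxE.
move=> [[r0 r1] rB]; split; first split.
- by move=> i; rewrite mxE; exact: r0.
- by rewrite -r1; apply: eq_bigr => i _; rewrite mxE mul1r.
- apply/matrixP => k l; rewrite (ord1 l) -(rB k I) mxE.
  by apply: eq_bigr => i _; rewrite mxE.
Qed.

(* Heine-Borel ([bounded_closed_compact]) is stated for row vectors. *)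
Lemma compact_Zset_row : compact [set r : 'rV[R]_n | Zset B v r^T].
Proof.
apply: bounded_closed_compact.
  rewrite /bounded_near /=; near=> M => r [[r0 r1] _] /=.
  rewrite [leLHS]/Num.norm /= mx_normrE.
  apply: (@le_trans _ _ 1); last by near: M; apply: nbhs_pinfty_ge; rewrite real1.
  apply: bigmax_le => // -[a k] _ /=.
  rewrite (ord1 a) ger0_norm; last by move: (r0 k); rewrite mxE.
  by move: (@simplex_le1 R n r^T k (conj r0 r1)); rewrite mxE.
rewrite Zset_rowE; apply: closedI; first apply: closedI.
- apply: closed_bigI => i _.
  apply: (@preimage_closed _ R (fun r : 'rV[R]_n => r 0 i) [set x | 0 <= x]);
    last exact: closed_ge.
  by move=> r _; exact: coord_continuous.
- exact: closed_linear_row_eq.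
- by apply: closed_bigI => k _; exact: closed_linear_row_eq.
Unshelve. all: by end_near.
Qed.

Lemma Zset_nearest (x : 'cV[R]_n) : convA B v ->
  exists2 z, Zset B v z & forall z', Zset B v z' -> l1norm (x - z) <= l1norm (x - z').
Proof.
move=> [z0 sz0 Bz0].
pose g (r : 'rV[R]_n) := l1norm (x - r^T).
have g_cont : continuous g.
  move=> r; apply: continuous_big => [|i _ {}r]; first exact: add_continuous.
  apply: (continuous_comp (f := fun r : 'rV[R]_n => (x - r^T) i 0));
    last exact: norm_continuous.
  under [X in {for _, continuous X}]eq_fun do rewrite !mxE.
  by apply: continuousB; [exact: cst_continuous | exact: coord_continuous].
have Z0 : [set r : 'rV[R]_n | Zset B v r^T] !=set0 by exists z0^T; rewrite /= trmxK.
have [c Zc cmin] := compact_EVT_min Z0 compact_Zset_row (continuous_subspaceT g_cont).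
exists c^T; first by move: Zc; rewrite inE.
by move=> z' Zz'; rewrite -(trmxK z'); apply: cmin; rewrite inE /= trmxK.
Qed.

Lemma distZ_nearest (x z : 'cV[R]_n) : Zset B v z ->
  (forall z', Zset B v z' -> l1norm (x - z) <= l1norm (x - z')) ->
  distZ B x v = l1norm (x - z).
Proof.
move=> Zz zmin; apply/le_anti/andP; split.
  apply: ge_inf; last by exists z.
  by exists 0 => _ [z' _ <-]; exact: l1norm_ge0.
by apply: lb_le_inf; [exists (l1norm (x - z)); exists z | move=> _ [z' /zmin ? <-]].
Qed.

End NearestPoint.

Section SimplexDifference.
Variable R : realType.

Lemma sum_simplex_sub n (x z : 'cV[R]_n) : simplex x -> simplex z ->
  \sum_k (x - z) k 0 = 0.
Proof.
move=> [_ sx] [_ sz]; under eq_bigr do rewrite !mxE.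
by rewrite sumrB sx sz subrr.
Qed.

Lemma pos_neg_parts (a : R) : let P := (`|a| + a) / 2 in let N := (`|a| - a) / 2 in
  [/\ P - N = a, P + N = `|a|, P * N = 0, 0 <= P & 0 <= N].
Proof.
by move=> P N; rewrite {}/P {}/N; have [a0|a0] := leP 0 a;
  [rewrite ger0_norm // | rewrite ltr0_norm //]; split; lra.
Qed.

Lemma simplex_sub_decomp n (x z : 'cV[R]_n) : simplex x -> simplex z -> x != z ->
  exists t p q, [/\ 0 < t, simplex p /\ simplex q,
    forall k, p k 0 * q k 0 = 0 /\ t * q k 0 <= z k 0,
    x - z = t *: (p - q) & l1norm (x - z) = 2 * t].
Proof.
move=> sx sz xz; set w := x - z.
pose P k := (`|w k 0| + w k 0) / 2; pose N k := (`|w k 0| - w k 0) / 2.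
have parts k : [/\ P k - N k = w k 0, P k + N k = `|w k 0|, P k * N k = 0,
    0 <= P k & 0 <= N k] by exact: pos_neg_parts.
pose t := \sum_k P k.
have sumN : \sum_k N k = t.
  have : \sum_k (P k - N k) = 0.
    rewrite -[RHS](sum_simplex_sub sx sz); apply: eq_bigr => k _; by have [] := parts k.
  by rewrite sumrB => /eqP; rewrite subr_eq0 => /eqP.
have l1E : l1norm w = 2 * t.
  rewrite /l1norm; under eq_bigr => k _ do have [_ <- _ _ _] := parts k.
  by rewrite big_split /= sumN mulr2n mulrDl mul1r.
have t_gt0 : 0 < t.
  rewrite lt_def sumr_ge0 ?andbT => [|k _]; last by have [] := parts k.
  apply: contraNneq xz => t0; rewrite -subr_eq0; apply/eqP/l1norm_eq0.
  by rewrite l1E t0 mulr0.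
have simplex_part (F : 'I_n -> R) : (forall k, 0 <= F k) -> \sum_k F k = t ->
    simplex (t^-1 *: \col_k F k).
  move=> F0 Ft; split; first by move=> k; rewrite !mxE mulr_ge0 // invr_ge0 ltW.
  under eq_bigr do rewrite !mxE.
  by rewrite -mulr_sumr Ft mulVf ?gt_eqF.
exists t, (t^-1 *: \col_k P k), (t^-1 *: \col_k N k); split => //.
- by split; apply: simplex_part => // k; have [] := parts k.
- move=> k; rewrite !mxE; have [_ _ PN _ N0] := parts k; split.
    by rewrite mulrACA PN mulr0.
  rewrite mulrA mulfV ?gt_eqF // mul1r /N /w !mxE.
  case: sx sz => /(_ k) x0 _ [/(_ k) z0 _].
  by have [d0|d0] := leP 0 (x k 0 - z k 0);
    [rewrite ger0_norm // | rewrite ltr0_norm //]; lra.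
- apply/matrixP => k l; rewrite (ord1 l) [RHS]mxE !mxE -mulrBr mulrA mulfV ?gt_eqF //.
  by have [-> _ _ _ _] := parts k; rewrite mul1r /w !mxE.
Qed.

Lemma norm_disjoint_sub (a b c : R) : 0 <= a -> 0 <= b -> a * b = 0 -> 0 <= c <= a ->
  `|a - b - c| = a + b - c.
Proof.
move=> a0 b0 /eqP; rewrite mulf_eq0 => /orP[|] /eqP ab0 /andP[c0 ca].
  have c_eq0 : c = 0 by apply/le_anti; rewrite c0 -ab0 ca.
  by rewrite ab0 c_eq0 sub0r subr0 normrN ger0_norm // add0r subr0.
by rewrite ab0 subr0 addr0 ger0_norm // subr_ge0.
Qed.

(* Replacing [d q] by [d ((1 - s) r + s e_j)] in [t (p - q)] trades mass [d s] of the
   negative part against the positive part at [j]. *)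
Lemma l1norm_shift_to_vertex n (p q r : 'cV[R]_n) (t d s : R) j :
  simplex p -> simplex q -> simplex r -> (forall k, p k 0 * q k 0 = 0) ->
  0 <= t -> 0 <= d <= t * p j 0 -> 0 <= s <= 1 ->
  l1norm (t *: (p - q) - d *: ((1 - s) *: r + s *: delta_mx j 0 - q)) <= 2 * t - 2 * d * s.
Proof.
move=> sp [q0 q1] [r0 r1] pq t0 /andP[d0 dp] /andP[s0 s1].
have [p0 p1] := sp.
have dt : d <= t by apply: le_trans dp _; rewrite ler_piMr ?simplex_le1.
apply: (@le_trans _ _ (\sum_k (t * p k 0 + (t - d) * q k 0 - d * s * (k == j)%:R
    + d * (1 - s) * r k 0))).
  apply: ler_sum => k _.
  have -> : (t *: (p - q) - d *: ((1 - s) *: r + s *: delta_mx j 0 - q)) k 0 =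
      t * p k 0 - (t - d) * q k 0 - d * s * (k == j)%:R - d * (1 - s) * r k 0.
    by rewrite !mxE eqxx andbT; ring.
  apply: le_trans (ler_normB _ _) _.
  rewrite norm_disjoint_sub ?mulr_ge0 ?subr_ge0 //.
  - by rewrite ger0_norm // !mulr_ge0 ?subr_ge0.
  - by rewrite mulrACA pq mulr0.
  - have [->|_] := eqVneq k j; last by rewrite mulr0 mulr_ge0.
    by rewrite mulr1 (le_trans _ dp) // ler_piMr.
rewrite !big_split /= -!mulr_sumr sumrN -mulr_sumr p1 q1 r1.
under eq_bigr do rewrite -delta_cvE.
by rewrite sum_delta_cv; lra.
Qed.

End SimplexDifference.

Section EuclideanNorm.
Variable R : realType.
Implicit Types (m n : nat).

Lemma norm2_ge0 m (v : 'cV[R]_m) : 0 <= norm2 v.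
Proof. exact: sqrtr_ge0. Qed.

Lemma norm2_sq m (v : 'cV[R]_m) : norm2 v ^+ 2 = \sum_i v i 0 ^+ 2.
Proof. by rewrite sqr_sqrtr // sumr_ge0 // => i _; exact: sqr_ge0. Qed.

Lemma norm2_0 m : norm2 (0 : 'cV[R]_m) = 0.
Proof. by rewrite /norm2 big1 ?sqrtr0 // => i _; rewrite mxE expr0n. Qed.

Lemma norm2N m (v : 'cV[R]_m) : norm2 (- v) = norm2 v.
Proof. by congr Num.sqrt; apply: eq_bigr => i _; rewrite mxE sqrrN. Qed.

Lemma norm2Z_sq m (s : R) (v : 'cV[R]_m) : norm2 (s *: v) ^+ 2 = s ^+ 2 * norm2 v ^+ 2.
Proof. by rewrite !norm2_sq mulr_sumr; apply: eq_bigr => i _; rewrite mxE exprMn. Qed.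

Lemma sqr_convex_comb (I : finType) (l a : I -> R) :
  (forall i, 0 <= l i) -> \sum_i l i = 1 ->
  (\sum_i l i * a i) ^+ 2 <= \sum_i l i * a i ^+ 2.
Proof.
move=> l0 l1.
have expand c : \sum_i l i * (a i - c) ^+ 2 =
    \sum_i l i * a i ^+ 2 - 2 * c * (\sum_i l i * a i) + c ^+ 2 * \sum_i l i.
  rewrite !mulr_sumr -sumrN -!big_split /=.
  by apply: eq_bigr => i _; ring.
have := expand (\sum_i l i * a i).
have : 0 <= \sum_i l i * (a i - \sum_i l i * a i) ^+ 2.
  by apply: sumr_ge0 => i _; rewrite mulr_ge0 ?sqr_ge0.
by rewrite l1; lra.
Qed.

Lemma diam_ub m n (B : 'M[R]_(m, n)) i j : norm2 (col i B - col j B) <= diam B.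
Proof.
apply: ub_le_sup; last by exists i => //; exists j.
exists (\sum_(ij : 'I_n * 'I_n) norm2 (col ij.1 B - col ij.2 B)).
move=> _ [a _ [b _ <-]].
by rewrite (bigD1 (a, b)) //= lerDl; apply: sumr_ge0 => ij _; exact: norm2_ge0.
Qed.

(* [B p - B q] is the [p_i q_j]-convex combination of the [col i B - col j B]. *)
Lemma norm2_convA_sub_le_diam m n (B : 'M[R]_(m, n)) (p q : 'cV[R]_n) :
  simplex p -> simplex q -> norm2 (B *m p - B *m q) ^+ 2 <= diam B ^+ 2.
Proof.
move=> [p0 p1] [q0 q1].
pose l (ij : 'I_n * 'I_n) := p ij.1 0 * q ij.2 0.
have l0 ij : 0 <= l ij by rewrite mulr_ge0.
have l1 : \sum_ij l ij = 1.
  rewrite -(pair_big xpredT xpredT (fun i j => p i 0 * q j 0)) /=.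
  by under eq_bigr do rewrite -mulr_sumr q1 mulr1.
have combE k : (B *m p - B *m q) k 0 = \sum_ij l ij * (B k ij.1 - B k ij.2).
  rewrite -(pair_big xpredT xpredT (fun i j => l (i, j) * (B k i - B k j))) /= !mxE.
  under [RHS]eq_bigr do rewrite /l /=.
  have -> : \sum_i B k i * p i 0 = \sum_i \sum_j p i 0 * q j 0 * B k i.
    by apply: eq_bigr => i _; rewrite -mulr_suml -mulr_sumr q1 mulr1 mulrC.
  have -> : \sum_j B k j * q j 0 = \sum_i \sum_j p i 0 * q j 0 * B k j.
    rewrite exchange_big; apply: eq_bigr => j _ /=.
    by under eq_bigr do rewrite -mulrA; rewrite -mulr_suml p1 mul1r mulrC.
  by rewrite -sumrB; apply: eq_bigr => i _; rewrite -sumrB; apply: eq_bigr => j _; ring.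
rewrite norm2_sq; under eq_bigr do rewrite combE.
apply: (@le_trans _ _ (\sum_k \sum_ij l ij * (B k ij.1 - B k ij.2) ^+ 2)).
  by apply: ler_sum => k _; exact: sqr_convex_comb.
rewrite exchange_big /= -[leRHS]mul1r -l1 mulr_suml.
apply: ler_sum => ij _; rewrite -mulr_sumr ler_wpM2l //.
have -> : \sum_k (B k ij.1 - B k ij.2) ^+ 2 = norm2 (col ij.1 B - col ij.2 B) ^+ 2.
  by rewrite norm2_sq; apply: eq_bigr => k _; rewrite !mxE.
by rewrite !expr2 ler_pM ?norm2_ge0 ?diam_ub.
Qed.

End EuclideanNorm.

Section Faces.
Variables (R : realType) (m n : nat) (B : 'M[R]_(m, n)).

Lemma face_col_support F (z : 'cV[R]_n) k :
  is_face (convA B) F -> simplex z -> F (B *m z) -> 0 < z k 0 -> F (col k B).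
Proof.
move=> [_ _ Fext] sz Fz zk0.
have [zk1|zk1] := eqVneq (z k 0) 1; first by rewrite colE -(simplex_eq_delta sz zk1).
have hk : 0 < z k 0 < 1 by rewrite zk0 lt_neqAle zk1 simplex_le1.
have [r [sr _ _ zE]] := simplex_split sz hk.
have : F ((1 - z k 0) *: (B *m r) + z k 0 *: col k B).
  by rewrite colE !scalemxAr -mulmxDr -zE.
by case/Fext => //; [exists r | exact: convA_col].
Qed.

Lemma convA_sub F : convex_set F -> (forall j, F (col j B)) -> convA B `<=` F.
Proof.
move=> Fcv Fcol _ [z sz <-].
elim: {z}#|[pred j | z j 0 != 0]| {-2}z (leqnn #|[pred j | z j 0 != 0]|) sz
  => [|s IH] z supp sz.
  have [k zk] := simplex_neq0 sz.
  by move: supp; rewrite leqn0 => /eqP/card0_eq/(_ k); rewrite !inE zk.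
have [k zk] := simplex_neq0 sz.
have zk0 : 0 < z k 0 by rewrite lt_def zk; case: sz => + _; apply.
have [zk1|zk1] := eqVneq (z k 0) 1; first by rewrite (simplex_eq_delta sz zk1) -colE.
have hk : 0 < z k 0 < 1 by rewrite zk0 lt_neqAle zk1 simplex_le1.
have [r [sr rk rz zE]] := simplex_split sz hk.
rewrite zE mulmxDr -!scalemxAr -colE.
apply: Fcv; [|exact: Fcol|by rewrite (ltW zk0) simplex_le1].
apply: IH sr; rewrite -ltnS; apply: leq_trans supp; apply: proper_card.
apply/properP; split.
  by apply/fintype.subsetP => i; rewrite !inE; apply: contraNN => /eqP/rz ->.
by exists k; rewrite !inE ?rk ?eqxx.
Qed.

Lemma proper_face_missing_col F :
  is_face (convA B) F -> F <> convA B -> exists j, ~ F (col j B).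
Proof.
move=> [FC Fcv _] FB; apply: contra_notP FB => Fcols.
apply/seteqP; split => //; apply: convA_sub => // j.
by apply: contra_notP Fcols => Fj; exists j.
Qed.

(* The smallest face of [convA B] containing [y]. *)
Definition min_face (y : 'cV[R]_m) : set 'cV[R]_m :=
  [set c | convA B c /\ exists2 e, 0 < e & convA B (y + e *: (y - c))].

Lemma min_face_self y : convA B y -> min_face y y.
Proof. by move=> hy; split => //; exists 1 => //; rewrite subrr scaler0 addr0. Qed.

Lemma convA_prolong_le (y c : 'cV[R]_m) e1 e : convA B y ->
  convA B (y + e1 *: (y - c)) -> 0 < e <= e1 -> convA B (y + e *: (y - c)).
Proof.
move=> hy h1 /andP[e0 ee1].
have e1_gt0 : 0 < e1 := lt_le_trans e0 ee1.
have hs : 0 <= e / e1 <= 1.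
  by rewrite divr_ge0 ?(ltW e0) ?(ltW e1_gt0) //= ler_pdivrMr ?mul1r.
suff <- : (1 - e / e1) *: y + e / e1 *: (y + e1 *: (y - c)) = y + e *: (y - c).
  exact: convA_convex hy h1 hs.
by apply/matrixP => i j; rewrite !mxE; field; rewrite gt_eqF.
Qed.

Lemma convA_prolong_endpoint (y a b : 'cV[R]_m) s e : convA B y -> convA B b ->
  0 < s < 1 -> 0 < e -> convA B (y + e *: (y - ((1 - s) *: a + s *: b))) ->
  exists2 d, 0 < d & convA B (y + d *: (y - a)).
Proof.
move=> hy hb /andP[s0 s1] e0 hc.
have k0 : 0 < 1 + s * e by rewrite ltr_wpDr ?mulr_ge0 ?ltW.
exists ((1 - s) * e / (2 * (1 + s * e))); first by rewrite divr_gt0 ?mulr_gt0 //; lra.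
have := convA_comb3 hy hc hb (l0 := 2^-1) (l1 := (2 * (1 + s * e))^-1)
  (l2 := s * e / (2 * (1 + s * e))).
have -> : 2^-1 *: y + (2 * (1 + s * e))^-1 *: (y + e *: (y - ((1 - s) *: a + s *: b))) +
    s * e / (2 * (1 + s * e)) *: b = y + (1 - s) * e / (2 * (1 + s * e)) *: (y - a).
  by apply/matrixP => i j; rewrite !mxE; field; rewrite gt_eqF.
apply; rewrite ?invr_ge0 ?divr_ge0 ?mulr_ge0 //; try lra.
by field; rewrite gt_eqF.
Qed.

Lemma min_face_is_face y : convA B y -> is_face (convA B) (min_face y).
Proof.
move=> hy; split; first by move=> c [].
  move=> c1 c2 s [h1 [e1 e1p H1]] [h2 [e2 e2p H2]] hs; split.
    exact: convA_convex.
  set e := Order.min e1 e2.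
  have e_gt0 : 0 < e by rewrite lt_min e1p e2p.
  exists e => //.
  have le1 : 0 < e <= e1 by rewrite e_gt0 ge_min lexx.
  have le2 : 0 < e <= e2 by rewrite e_gt0 ge_min lexx orbT.
  suff -> : y + e *: (y - ((1 - s) *: c1 + s *: c2)) =
      (1 - s) *: (y + e *: (y - c1)) + s *: (y + e *: (y - c2)).
    exact: convA_convex (convA_prolong_le hy H1 le1) (convA_prolong_le hy H2 le2) hs.
  by apply/matrixP => i j; rewrite !mxE; ring.
move=> a b s ha hb hs [_ [e e0 He]]; split; split => //.
  exact: convA_prolong_endpoint He.
have hs' : 0 < 1 - s < 1 by case/andP: hs => ? ?; apply/andP; split; lra.
apply: (convA_prolong_endpoint (s := 1 - s) hy ha hs' e0).
by rewrite subKr [_ *: b + _]addrC.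
Qed.

End Faces.

Section NearestFace.
Variables (R : realType) (m n : nat) (B : 'M[R]_(m, n)) (v : 'cV[R]_m) (x z : 'cV[R]_n).
Hypotheses (Zz : Zset B v z)
  (zmin : forall z', Zset B v z' -> l1norm (x - z) <= l1norm (x - z')).

(* If [col j B] lay in the smallest face of [B q] while [p j > 0], the nearest point
   [z] could be moved towards [e_j] without leaving [Z(v)], decreasing the distance. *)
Lemma nearest_min_face_support (p q : 'cV[R]_n) t j :
  simplex p -> simplex q -> (forall k, p k 0 * q k 0 = 0 /\ t * q k 0 <= z k 0) ->
  0 < t -> x - z = t *: (p - q) -> l1norm (x - z) = 2 * t ->
  min_face B (B *m q) (col j B) -> p j 0 = 0.
Proof.
move=> sp sq pq t0 xzE l1E [_ [e e0 [r sr Br]]].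
have [p0 _] := sp; have [z0 z1] := Zz.1.
apply/eqP; apply: contraT => pj_neq0.
have pj0 : 0 < p j 0 by rewrite lt_def pj_neq0 p0.
set d := t * p j 0; set s := e / (1 + e).
have d0 : 0 < d by rewrite mulr_gt0.
have s_bounds : 0 <= s <= 1 by rewrite divr_ge0 ?ler_pdivrMr ?mul1r; lra.
(* [B r = B q + e (B q - col j B)] makes [B q] the [s]-combination of [B r]
   and [col j B]. *)
pose q' := (1 - s) *: r + s *: delta_mx j 0.
have sq' : simplex q' by apply: simplex_convex => //; exact: simplex_delta.
have Bq' : B *m q' = B *m q.
  rewrite mulmxDr -!scalemxAr Br -colE; apply/matrixP => i l; rewrite !mxE /s.
  by field; rewrite gt_eqF // ltr_pwDr.
have s0 : 0 < s by rewrite divr_gt0 // ltr_pwDr.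
have shift : l1norm (x - z - d *: (q' - q)) <= 2 * t - 2 * d * s.
  rewrite xzE; apply: l1norm_shift_to_vertex => //; first by move=> k; case: (pq k).
  - exact: ltW.
  - by apply/andP; split; [exact: ltW | exact: lexx].
clearbody q'.
have Zz' : Zset B v (z + d *: (q' - q)).
  split; last by rewrite mulmxDr -scalemxAr mulmxBr Bq' subrr scaler0 addr0 Zz.2.
  split.
    move=> k; have [_ tqz] := pq k; have [q'0 _] := sq'; have [q0 _] := sq.
    have : d * q k 0 <= t * q k 0.
      by apply: ler_wpM2r => //; rewrite ler_piMr ?(ltW t0) // simplex_le1.
    by move: (q'0 k); rewrite !mxE; nra.
  under eq_bigr do rewrite !mxE.
  by rewrite big_split /= -mulr_sumr sumrB z1 sq'.2 sq.2 subrr mulr0 addr0.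
by have := zmin Zz'; rewrite opprD addrA l1E; nra.
Qed.

Lemma nearest_proper_face : simplex x -> x != z ->
  exists F, [/\ is_face (convA B) F, F !=set0, F <> convA B &
    exists y w, [/\ F y, conv_cols_notin B F w &
      norm2 (B *m x - v) ^+ 2 / l1norm (x - z) ^+ 2 = norm2 (y - w) ^+ 2 / 4]].
Proof.
move=> sx xz.
have [t [p [q [t0 [sp sq] pq xzE l1E]]]] := simplex_sub_decomp sx Zz.1 xz.
have supp j : min_face B (B *m q) (col j B) -> p j 0 = 0.
  exact: nearest_min_face_support sp sq pq t0 xzE l1E.
have yB : convA B (B *m q) by exists q.
have [j pj] := simplex_neq0 sp.
exists (min_face B (B *m q)); split.
- exact: min_face_is_face.
- by exists (B *m q); exact: min_face_self.
- by move=> FB; move/eqP: pj; apply; apply: supp; rewrite FB; exact: convA_col.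
exists (B *m q), (B *m p); split.
- exact: min_face_self.
- by exists p => //; split => // k /supp.
have -> : B *m x - v = t *: (B *m p - B *m q).
  by rewrite -Zz.2 -mulmxBr xzE -scalemxAr mulmxBr.
by rewrite norm2Z_sq l1E -opprB norm2N; field; rewrite gt_eqF.
Qed.

End NearestFace.

Section Extrema.
Variable R : realType.

Lemma sup_sqr_le (E : set R) c : E !=set0 ->
  (forall e, E e -> 0 <= e /\ e ^+ 2 <= c) -> sup E ^+ 2 <= c.
Proof.
move=> [e0 Ee0] hE; have [e0_ge0 e0c] := hE _ Ee0.
have c0 : 0 <= c := le_trans (sqr_ge0 e0) e0c.
have le_sqrt e : E e -> e <= Num.sqrt c.
  by move=> /hE[e_ge0 ec]; rewrite -(ger0_norm e_ge0) -sqrtr_sqr ler_sqrt.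
have supE0 : 0 <= sup E.
  by apply: le_trans e0_ge0 (ub_le_sup _ Ee0); exists (Num.sqrt c) => e /le_sqrt.
have := ge_sup (ex_intro _ e0 Ee0) le_sqrt.
by move=> h; rewrite -(sqr_sqrtr c0) !expr2 ler_pM.
Qed.

Lemma le_inf_sqr (E : set R) c : 0 <= c -> E !=set0 ->
  (forall e, E e -> 0 <= e /\ c <= e ^+ 2) -> c <= inf E ^+ 2.
Proof.
move=> c0 E0 hE; have : Num.sqrt c <= inf E.
  apply: (lb_le_inf E0) => e /hE[e0 ce].
  by rewrite -(ger0_norm e0) -sqrtr_sqr ler_sqrt ?sqr_ge0.
by move=> h; rewrite -(sqr_sqrtr c0) !expr2 ler_pM ?sqrtr_ge0.
Qed.

Lemma inf_ge0 (E : set R) : (forall e, E e -> 0 <= e) -> 0 <= inf E.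
Proof.
move=> E_ge0; have [[e Ee]|E0] := pselect (E !=set0).
  by apply: lb_le_inf => [|y /E_ge0]; first by exists e.
suff -> : E = set0 by rewrite inf0.
by apply/seteqP; split => // e Ee; apply: E0; exists e.
Qed.

Lemma setdist_ge0 m (F G : set 'cV[R]_m) : 0 <= setdist F G.
Proof. by apply: inf_ge0 => _ [u _ [w _ <-]]; exact: norm2_ge0. Qed.

Lemma setdist_le m (F G : set 'cV[R]_m) u w : F u -> G w -> setdist F G <= norm2 (u - w).
Proof.
move=> Fu Gw; apply: ge_inf; last by exists u => //; exists w.
by exists 0 => _ [a _ [b _ <-]]; exact: norm2_ge0.
Qed.

Lemma facial_dist_le m n (B : 'M[R]_(m, n)) F :
  is_face (convA B) F -> F !=set0 -> F <> convA B ->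
  facial_dist B <= setdist F (conv_cols_notin B F).
Proof.
move=> hF F0 FB; apply: ge_inf; last by exists F.
by exists 0 => _ [G _ <-]; exact: setdist_ge0.
Qed.

End Extrema.

Section SqRatioSet.
Variables (R : realType) (m n : nat) (B : 'M[R]_(m, n)).

Definition sq_ratio_set : set (\bar R) :=
  [set r | exists (v : 'cV[R]_m) (x : 'cV[R]_n),
     [/\ convA B v, simplex x, ~ Zset B v x &
         r = (norm2 (B *m x - v) ^+ 2 / distZ B x v ^+ 2)%:E]].

Lemma norm2_mul_simplex_sub_le (x z : 'cV[R]_n) : simplex x -> simplex z ->
  norm2 (B *m (x - z)) ^+ 2 <= diam B ^+ 2 * l1norm (x - z) ^+ 2 / 4.
Proof.
move=> sx sz; have [<-|xz] := eqVneq x z.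
  rewrite subrr mulmx0 norm2_0 expr0n /=.
  by apply: divr_ge0 => //; apply: mulr_ge0; exact: sqr_ge0.
have [t [p [q [t0 [sp sq] _ xzE l1E]]]] := simplex_sub_decomp sx sz xz.
rewrite l1E xzE -scalemxAr mulmxBr norm2Z_sq.
have -> : diam B ^+ 2 * (2 * t) ^+ 2 / 4 = t ^+ 2 * diam B ^+ 2 by field.
by rewrite ler_wpM2l ?sqr_ge0 ?norm2_convA_sub_le_diam.
Qed.

Lemma sq_ratio_set_le_diam r : sq_ratio_set r -> (r <= (diam B ^+ 2 / 4)%:E)%E.
Proof.
move=> [v [x [hv sx _ ->]]]; rewrite lee_fin.
have [z Zz zmin] := Zset_nearest x hv.
rewrite (distZ_nearest Zz zmin) -Zz.2 -mulmxBr.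
have [d0|d_neq0] := eqVneq (l1norm (x - z)) 0.
  by rewrite d0 expr0n invr0 mulr0 divr_ge0 ?sqr_ge0.
rewrite ler_pdivrMr ?exprn_gt0 ?lt_def ?d_neq0 ?l1norm_ge0 // mulrAC.
exact: norm2_mul_simplex_sub_le sx Zz.1.
Qed.

(* Take [x = e_i] and [v = col j B]; the distance is at most 2. *)
Lemma sq_ratio_set_col_pair i j : col i B != col j B ->
  exists2 r, sq_ratio_set r & ((norm2 (col i B - col j B) ^+ 2 / 4)%:E <= r)%E.
Proof.
move=> ij; have hv := convA_col B j; have sx := simplex_delta R i.
have nZ : ~ Zset B (col j B) (delta_mx i 0).
  by move=> [_]; rewrite -colE => /eqP; exact/negP.
exists (norm2 (B *m delta_mx i 0 - col j B) ^+ 2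
        / distZ B (delta_mx i 0) (col j B) ^+ 2)%:E.
  by exists (col j B), (delta_mx i 0).
have [z Zz zmin] := Zset_nearest (delta_mx i 0) hv.
rewrite lee_fin -colE (distZ_nearest Zz zmin).
have d_gt0 : 0 < l1norm (delta_mx i 0 - z).
  rewrite lt_def l1norm_ge0 andbT; apply/eqP => /l1norm_eq0/eqP; rewrite subr_eq0.
  by move=> /eqP iz; apply: nZ; rewrite iz.
have d_le2 := l1norm_simplex_sub_le2 sx Zz.1.
rewrite ler_pdivlMr ?exprn_gt0 // mulrAC ler_pdivrMr // ler_wpM2l ?sqr_ge0 //.
by nra.
Qed.

Lemma sq_ratio_set_face r : sq_ratio_set r ->
  exists F, [/\ is_face (convA B) F, F !=set0, F <> convA B &
    exists y w, [/\ F y, conv_cols_notin B F w & r = (norm2 (y - w) ^+ 2 / 4)%:E]].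
Proof.
move=> [v [x [hv sx nZ ->]]].
have [z Zz zmin] := Zset_nearest x hv.
have xz : x != z by apply: contra_notN nZ => /eqP ->.
have [F [hF F0 FB [y [w [Fy Gw ratioE]]]]] := nearest_proper_face Zz zmin sx xz.
by exists F; split => //; exists y, w; rewrite (distZ_nearest Zz zmin) ratioE.
Qed.

Lemma sq_ratio_set_ge_facial r : sq_ratio_set r -> ((facial_dist B ^+ 2 / 4)%:E <= r)%E.
Proof.
move=> /sq_ratio_set_face[F [hF F0 FB [y [w [Fy Gw ->]]]]].
have le_yw := le_trans (facial_dist_le hF F0 FB) (setdist_le Fy Gw).
have Phi_ge0 : 0 <= facial_dist B by apply: inf_ge0 => _ [G _ <-]; exact: setdist_ge0.
by rewrite lee_fin ler_pM2r // !expr2 ler_pM.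
Qed.

(* Every point of [Z(u)] is supported on the columns in [F], disjointly from [x],
   so [dist(x, Z(u)) = 2]. *)
Lemma sq_ratio_set_face_pair F u (x : 'cV[R]_n) : is_face (convA B) F -> F u ->
  simplex x -> (forall j, F (col j B) -> x j 0 = 0) ->
  sq_ratio_set (norm2 (u - B *m x) ^+ 2 / 4)%:E.
Proof.
move=> hF Fu sx xF; have hu : convA B u by case: hF => + _ _; exact.
have dist2 z : Zset B u z -> l1norm (x - z) = 2.
  move=> [sz Bz]; apply: l1norm_sub_disjoint => // k.
  have [zk0|zk_neq0] := eqVneq (z k 0) 0; first by rewrite zk0 mulr0.
  have zk_gt0 : 0 < z k 0 by rewrite lt_def zk_neq0; case: sz => + _; exact.
  by rewrite xF ?mul0r //; apply: face_col_support hF sz _ zk_gt0; rewrite Bz.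
have [z0 sz0 Bz0] := hu.
exists u, x; split => //.
  move=> /dist2; rewrite subrr /l1norm big1 => [|i _]; last by rewrite mxE normr0.
  by move/eqP; rewrite eq_sym pnatr_eq0.
have -> : distZ B x u = 2.
  rewrite /distZ (_ : [set _ | _ in _] = [set 2]) ?inf1 //.
  apply/seteqP; split => [_ [z' /dist2 -> <-] //|_ ->].
  by exists z0 => //; apply: dist2.
by rewrite -opprB norm2N; congr (_ / _)%:E; rewrite expr2; lra.
Qed.

End SqRatioSet.

Section SqRatioExtrema.
Variables (R : realType) (m n : nat) (B : 'M[R]_(m, n)) (i0 j0 : 'I_n).
Hypothesis ij0 : col i0 B != col j0 B.

Lemma ereal_sup_sq_ratio_set : ereal_sup (sq_ratio_set B) = (diam B ^+ 2 / 4)%:E.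
Proof.
have ub : (ereal_sup (sq_ratio_set B) <= (diam B ^+ 2 / 4)%:E)%E.
  by apply: ge_ereal_sup => r /sq_ratio_set_le_diam.
have col_le i j :
    ((norm2 (col i B - col j B) ^+ 2 / 4)%:E <= ereal_sup (sq_ratio_set B))%E.
  have [eij|/sq_ratio_set_col_pair[r Sr le_r]] := eqVneq (col i B) (col j B).
    have [r Sr le_r] := sq_ratio_set_col_pair ij0.
    apply: le_trans (le_trans _ le_r) (ereal_sup_ubound Sr).
    by rewrite eij subrr norm2_0 expr0n mul0r lee_fin divr_ge0 ?sqr_ge0.
  exact: le_trans le_r (ereal_sup_ubound Sr).
move: ub col_le; case: ereal_sup => [s| |] //= ub col_le; last first.
  by have := col_le i0 j0.
congr _%:E; apply/le_anti/andP; split; first by rewrite -lee_fin.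
suff : diam B ^+ 2 <= 4 * s by move=> h; lra.
apply: sup_sqr_le => [|_ [i _ [j _ <-]]].
  by exists (norm2 (col i0 B - col j0 B)), i0 => //; exists j0.
by split; [exact: norm2_ge0 | have := col_le i j; rewrite lee_fin; lra].
Qed.

Lemma ereal_inf_sq_ratio_set : ereal_inf (sq_ratio_set B) = (facial_dist B ^+ 2 / 4)%:E.
Proof.
have lb : ((facial_dist B ^+ 2 / 4)%:E <= ereal_inf (sq_ratio_set B))%E.
  by apply: le_ereal_inf_tmp => r /sq_ratio_set_ge_facial.
have [r0 Sr0 _] := sq_ratio_set_col_pair ij0.
have [F0 [hF0 F00 F0B _]] := sq_ratio_set_face Sr0.
have le_face F u w : is_face (convA B) F -> F u -> conv_cols_notin B F w ->
    (ereal_inf (sq_ratio_set B) <= (norm2 (u - w) ^+ 2 / 4)%:E)%E.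
  move=> hF Fu [x [sx xF] <-].
  exact: ereal_inf_lbound (sq_ratio_set_face_pair hF Fu sx xF).
move: lb (ereal_inf_lbound Sr0) le_face.
case: ereal_inf => [s| |] //= lb; last by case: Sr0 => v [x [_ _ _ ->]].
move=> _ le_face; congr _%:E; apply/le_anti/andP; split; last by rewrite -lee_fin.
have s0 : 0 <= 4 * s by move: lb; rewrite lee_fin; have := sqr_ge0 (facial_dist B); lra.
suff : 4 * s <= facial_dist B ^+ 2 by move=> h; lra.
apply: (le_inf_sqr s0) => [|_ [F [hF [u Fu] FB] <-]].
  by exists (setdist F0 (conv_cols_notin B F0)), F0.
split; first exact: setdist_ge0.
have [j Fj] := proper_face_missing_col hF FB.
apply: (le_inf_sqr s0) => [|_ [u' Fu' [w Gw <-]]].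
  exists (norm2 (u - col j B)), u => //; exists (col j B) => //.
  exists (delta_mx j 0); last by rewrite -colE.
  split=> [|k Fk]; first exact: simplex_delta.
  by rewrite delta_cvE; case: eqVneq Fk => // ->.
by split; [exact: norm2_ge0 | have := le_face F u' w hF Fu' Gw; rewrite lee_fin; lra].
Qed.

End SqRatioExtrema.

Section Quadratic.
Variables (R : realType) (m : nat).
Implicit Types (a c u d : 'cV[R]_m).

Lemma derive_quadratic_expansion (f : 'cV[R]_m -> R) u d (D E : R) :
  (forall h, f (h *: d + u) - f u = h * D + h ^+ 2 * E) -> 'D_d f u = D.
Proof.
move=> fE; apply: cvg_lim => //.
have : (fun h : R => D + h * E) @ 0^' --> D + 0 * E.
  apply: cvgD; first exact: cvg_cst.
  by apply: cvgM; [apply: cvg_trans (cvg_within _); exact: cvg_id | exact: cvg_cst].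
rewrite mul0r addr0; apply: cvg_trans; apply: near_eq_cvg; near=> h => /=.
have h_neq0 : h != 0 by near: h; exact: nbhs_dnbhs_neq.
by rewrite fE /GRing.scale /=; field.
Unshelve. all: by end_near.
Qed.

Let dot a c : R := (a^T *m c) 0 0.

Let dotDl a a' c : dot (a + a') c = dot a c + dot a' c.
Proof. by rewrite /dot linearD /= mulmxDl mxE. Qed.

Let dotZl k a c : dot (k *: a) c = k * dot a c.
Proof. by rewrite /dot linearZ /= -scalemxAl mxE. Qed.

Let dotDr a c c' : dot a (c + c') = dot a c + dot a c'.
Proof. by rewrite /dot mulmxDr mxE. Qed.

Let dotZr k a c : dot a (k *: c) = k * dot a c.
Proof. by rewrite /dot -scalemxAr mxE. Qed.

Let dot_norm2 a : dot a a = norm2 a ^+ 2.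
Proof. by rewrite /dot norm2_sq mxE; apply: eq_bigr => i _; rewrite mxE expr2. Qed.

Definition quadratic (Q : 'M[R]_m) (b u : 'cV[R]_m) : R :=
  2^-1 * ((Q *m u)^T *m u) 0 0 + (b^T *m u) 0 0.

Lemma bregman_quadratic n (Q S : 'M[R]_m) b (A : 'M[R]_(m, n)) u x :
  S^T *m S = Q -> bregman (quadratic Q b) A u x = 2^-1 * norm2 (S *m (A *m x - u)) ^+ 2.
Proof.
move=> SSQ; set d := A *m x - u.
have expand h : quadratic Q b (h *: d + u) - quadratic Q b u =
    h * (2^-1 * (dot (Q *m d) u + dot (Q *m u) d) + dot b d)
    + h ^+ 2 * (2^-1 * dot (Q *m d) d).
  rewrite /quadratic -!/(dot _ _) mulmxDr -scalemxAr !(dotDl, dotZl, dotDr, dotZr).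
  ring.
rewrite /bregman (derive_quadratic_expansion expand).
have -> : A *m x = 1 *: d + u by rewrite scale1r subrK.
rewrite expand expr1n !mul1r addrAC subrr add0r -dot_norm2 /dot -SSQ.
by rewrite !trmx_mul trmxK !mulmxA.
Qed.

Lemma ratio_set_quadratic n (Q S : 'M[R]_m) b (A : 'M[R]_(m, n)) :
  (forall w : 'cV[R]_m, S *m w = 0 -> w = 0) -> S^T *m S = Q ->
  ratio_set (quadratic Q b) A = sq_ratio_set (S *m A).
Proof.
move=> Sinj SSQ.
have ZsetS u : Zset A u = Zset (S *m A) (S *m u).
  apply/seteqP; split => z [sz Az]; split => //; first by rewrite -mulmxA Az.
  by apply/eqP; rewrite -subr_eq0; apply/eqP/Sinj; rewrite mulmxBr mulmxA Az subrr.
have ratioE u x : 2 * bregman (quadratic Q b) A u x / distZ A x u ^+ 2 =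
    norm2 (S *m A *m x - S *m u) ^+ 2 / distZ (S *m A) x (S *m u) ^+ 2.
  rewrite (bregman_quadratic b A u x SSQ) mulrA mulfV ?mul1r //.
  by rewrite /distZ ZsetS mulmxBr mulmxA.
apply/seteqP; split => _ [u [x [[z sz <-] sx nZ ->]]].
  exists (S *m (A *m z)), x; split => //; last by rewrite ratioE.
  - by exists z; rewrite // mulmxA.
  - by rewrite -ZsetS.
exists (A *m z), x; split; [by exists z | by [] | by rewrite ZsetS mulmxA |].
by rewrite ratioE mulmxA.
Qed.

End Quadratic.

Lemma pos_def_sqrt_inj (R : realType) m (Q S : 'M[R]_m) :
  (forall v : 'cV[R]_m, v != 0 -> 0 < (v^T *m Q *m v) 0 0) -> S *m S = Q ->
  forall w : 'cV[R]_m, S *m w = 0 -> w = 0.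
Proof.
move=> Qpd SSQ w Sw; apply/eqP; apply: contraT => /Qpd.
by rewrite -SSQ mulmxA -(mulmxA _ S) Sw mulmx0 mxE ltxx.
Qed.

Theorem corollary1 (R : realType) (m n : nat)
  (Q : 'M[R]_m) (b : 'cV[R]_m) (S : 'M[R]_m) (A : 'M[R]_(m, n)) :
  Q^T = Q ->
  (forall v : 'cV[R]_m, v != 0 -> 0 < (v^T *m Q *m v) 0 0) ->
  (* S = Q^{1/2}: the symmetric positive semidefinite square root of Q *)
  S^T = S ->
  (forall v : 'cV[R]_m, 0 <= (v^T *m S *m v) 0 0) ->
  S *m S = Q ->
  (exists i j : 'I_n, col i A != col j A) ->
  let f := fun u : 'cV[R]_m => 2^-1 * ((Q *m u)^T *m u) 0 0 + (b^T *m u) 0 0 in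
  [/\ Lconst f A = ((diam (S *m A)) ^+ 2 / 4)%:E,
      muconst f A = ((facial_dist (S *m A)) ^+ 2 / 4)%:E &
      fine (Lconst f A) / fine (muconst f A)
        = (diam (S *m A)) ^+ 2 / (facial_dist (S *m A)) ^+ 2].
Proof.
move=> _ Qpd ST _ SSQ [i0 [j0 Aij]] f.
have Sinj := pos_def_sqrt_inj Qpd SSQ.
have SAij : col i0 (S *m A) != col j0 (S *m A).
  apply: contra_neq Aij => SAij; apply/eqP; rewrite -subr_eq0; apply/eqP/Sinj.
  by move: SAij; rewrite mulmxBr !colE -!mulmxA => ->; rewrite subrr.
have ratioE : ratio_set f A = sq_ratio_set (S *m A).
  by apply: ratio_set_quadratic => //; rewrite ST.
have hL : Lconst f A = (diam (S *m A) ^+ 2 / 4)%:E.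
  by rewrite /Lconst ratioE (ereal_sup_sq_ratio_set SAij).
have hmu : muconst f A = (facial_dist (S *m A) ^+ 2 / 4)%:E.
  by rewrite /muconst ratioE (ereal_inf_sq_ratio_set SAij).
by split => //; rewrite hL hmu /= invf_div mulrA divfK.
Qed.
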